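(* Let $k\ge 2$ and let $K_{n_1,\ldots,n_k}$ be the complete $k$-partite graph with parts $V_1,\ldots,V_k$, where $n_1=|V_1|\ge n_2=|V_2|\ge\cdots\ge n_k=|V_k|\ge 1$. Then $$\omega(\mathrm{CUT}(K_{n_1,n_2,\ldots,n_k}))\ge 2^{n_2-1}.$$
   Context: For an undirected graph $G=(V,E)$ and $S\subseteq V$, $\delta(S)\subseteq E$ denotes the set of edges with exactly one endpoint in $S$, and $\mathbf v(S)\in\{0,1\}^{E}$ is its incidence vector ($v(S)_e=1$ iff $e\in\delta(S)$). The cut polytope is $\mathrm{CUT}(G)=\operatorname{conv}\{\mathbf v(S):S\subseteq V\}\subset\mathbb R^{E}$. The 1-skeleton of a polytope is the graph whose vertices are the polytope's vertices and whose edges are its one-dimensional faces; $\omega$ denotes its clique number. *)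

From HB Require Import structures.
From mathcomp Require Import all_boot all_order all_algebra.
Set Implicit Arguments. Unset Strict Implicit. Unset Printing Implicit Defensive.
Import Order.TTheory GRing.Theory Num.Theory.
Local Open Scope ring_scope.

Section Cut.
Variables (R : realFieldType) (T : finType).

(* Points of R^E are represented as finite functions on 2-subsets of T;
   coordinates outside the edge set E are always 0 for points of CUT(G). *)
Local Notation point := {ffun {set T} -> R}.

Definition cutvec (E : {set {set T}}) (S : {set T}) : point :=
  [ffun e => if (e \in E) && (#|e :&: S| == 1%N) then 1 else 0].

Definition in_cut (E : {set {set T}}) (x : point) : Prop :=
  exists w : {ffun {set T} -> R},
    (forall S, 0 <= w S) /\ \sum_S w S = 1 /\
    (forall e, x e = \sum_S w S * cutvec E S e).

Definition dot (c x : point) : R := \sum_e c e * x e.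

Definition is_face (E : {set {set T}}) (F : point -> Prop) : Prop :=
  exists (c : point) (d : R),
    (forall x, in_cut E x -> dot c x <= d) /\
    (forall x, F x <-> (in_cut E x /\ dot c x = d)).

Definition is_vertex E (v : point) : Prop := is_face E (fun x => x = v).

Definition segment (u w x : point) : Prop :=
  exists t : R, 0 <= t /\ t <= 1 /\ (forall e, x e = (1 - t) * u e + t * w e).

Definition adjacent E (u w : point) : Prop :=
  [/\ is_vertex E u, is_vertex E w, u <> w & is_face E (segment u w)].

Definition skeleton_clique_ge E (m : nat) : Prop :=
  exists s : seq point,
    [/\ uniq s, size s = m, (forall v, v \in s -> is_vertex E v) &
        (forall u w, u \in s -> w \in s -> u <> w -> adjacent E u w)].

End Cut.

Definition multipartite_edges (T : finType) (k : nat) (p : T -> 'I_k)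
  : {set {set T}} :=
  [set e : {set T} | [exists x, exists y, (p x != p y) && (e == [set x; y])]].

From HB Require Import structures.
From mathcomp Require Import all_boot all_order all_algebra.
Import Order.TTheory GRing.Theory Num.Theory.
Set Implicit Arguments. Unset Strict Implicit. Unset Printing Implicit Defensive.

(* Every cut vector v(S) is a vertex of CUT(G), and the segment [v(S), v(S')]
   is an edge of CUT(G) as soon as every cut U agreeing with S on the edges
   where S and S' agree has v(U) = v(S) or v(U) = v(S'): the inequality with
   coefficient +1 on the edges cut by both, -1 on the edges cut by neither and
   0 elsewhere is valid, and its tight cuts are exactly those agreeing cuts.
   In K_{n_1,...,n_k} pick a_0, ..., a_m in V_1 and b_0, ..., b_m in V_2 with
   m = n_2 - 1, and let S_X = {a_j, b_j | j in X} for X a subset of {1..m}.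
   For X <> X', the vertices split into the class where membership in S_X and
   S_X' coincides (it contains a_0, b_0) and its complement (it contains a_j,
   b_j for some j in X xor X').  Each class meets two parts, hence induces a
   connected subgraph, so a cut agreeing with S_X on the agreement edges
   differs from S_X by a constant on each class: it is S_X or S_X' up to
   complementation.  The 2^m vectors v(S_X) thus form a clique. *)

Lemma card_pairI_eq1 (T : finType) (x y : T) (Z : {set T}) : x != y ->
  (#|[set x; y] :&: Z| == 1)%N = ((x \in Z) != (y \in Z)).
Proof.
move=> xy.
have set1I z : [set z] :&: Z = if z \in Z then [set z] else set0.
  by apply/setP => u; case: ifP => zZ; rewrite !inE; case: eqP => // ->.
rewrite setIUl !set1I; case: (x \in Z); case: (y \in Z);
  by rewrite ?setU0 ?set0U ?cards2 ?cards1 ?cards0 ?xy.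
Qed.

Section ConvexCombinations.
Local Open Scope ring_scope.
Variables (R : realFieldType) (T : finType).
Local Notation point := {ffun {set T} -> R}.

Lemma segment_dot (c u u' x : point) d :
  dot c u = d -> dot c u' = d -> segment u u' x -> dot c x = d.
Proof.
move=> ud u'd [t [_ [_ xE]]]; rewrite /dot.
under eq_bigr do rewrite xE mulrDr mulrCA [c _ * (t * _)]mulrCA.
by rewrite big_split /= -!mulr_sumr -/(dot c u) -/(dot c u') ud u'd -mulrDl subrK mul1r.
Qed.

Lemma segment_same (u x : point) : segment u u x <-> x = u.
Proof.
split=> [[t [_ [_ xE]]]|->]; first by apply/ffunP => e; rewrite xE -mulrDl subrK mul1r.
exists 0; split=> //; split; first exact: ler01.
by move=> e; rewrite subr0 mul1r mul0r addr0.
Qed.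

Variables (f : {set T} -> point) (w : {ffun {set T} -> R}) (x : point).
Hypotheses (w_ge0 : forall U, 0 <= w U) (w_sum1 : \sum_U w U = 1)
  (xE : forall e, x e = \sum_U w U * f U e).

Lemma dot_combination c : dot c x = \sum_U w U * dot c (f U).
Proof.
rewrite /dot; under eq_bigr do rewrite xE mulr_sumr.
rewrite exchange_big; apply: eq_bigr => U _; rewrite mulr_sumr.
by apply: eq_bigr => e _; rewrite mulrCA.
Qed.

Lemma dot_combination_le c d : (forall U, dot c (f U) <= d) -> dot c x <= d.
Proof.
move=> le_d; rewrite dot_combination -[d]mul1r -w_sum1 mulr_suml.
by apply: ler_sum => U _; apply: ler_wpM2l.
Qed.

Lemma combination_tight c d : (forall U, dot c (f U) <= d) -> dot c x = d ->
  forall U, w U != 0 -> dot c (f U) = d.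
Proof.
move=> le_d xd U wU.
have slack0 : \sum_V w V * (d - dot c (f V)) = 0.
  under eq_bigr do rewrite mulrBr.
  by rewrite sumrB -mulr_suml w_sum1 mul1r -dot_combination xd subrr.
have slack_ge0 V : predT V -> 0 <= w V * (d - dot c (f V)).
  by move=> _; rewrite mulr_ge0 // subr_ge0.
move/eqP: (psumr_eq0P slack_ge0 slack0 (i := U) isT).
by rewrite mulf_eq0 (negbTE wU) subr_eq0 => /eqP.
Qed.

Lemma combination_segment u v :
  (forall U, w U != 0 -> f U = u \/ f U = v) -> segment u v x.
Proof.
move=> supp; pose t := \sum_(U | f U == v) w U.
have t_compl : 1 - t = \sum_(U | f U != v) w U.
  by rewrite -w_sum1 (bigID (fun U => f U == v)) /= addrC addrK.
exists t; split; first exact: sumr_ge0.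
split; first by rewrite -subr_ge0 t_compl sumr_ge0.
move=> e; rewrite xE (bigID (fun U => f U == v)) /= addrC t_compl !mulr_suml.
congr (_ + _); apply: eq_bigr => U; last by move/eqP ->.
move=> fUv; have [->|wU] := eqVneq (w U) 0; first by rewrite !mul0r.
by case: (supp U wU) => fU; [rewrite fU | rewrite fU eqxx in fUv].
Qed.

End ConvexCombinations.

Section CutPolytopeFaces.
Local Open Scope ring_scope.
Variables (R : realFieldType) (T : finType) (E : {set {set T}}).
Local Notation point := {ffun {set T} -> R}.
Local Notation v := (@cutvec R T E).

Definition cuts (S e : {set T}) : bool := (e \in E) && (#|e :&: S| == 1)%N.

Lemma cutvecE S e : v S e = (cuts S e)%:R.
Proof. by rewrite ffunE /cuts; case: ifP. Qed.

(* Edges outside E get -1 here, but every cut vector vanishes on them. *)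
Definition agreement_normal S S' : point :=
  [ffun e => if cuts S e == cuts S' e then (if cuts S e then 1 else -1) else 0].

Lemma agreement_term_leif S S' U e :
  agreement_normal S S' e * v U e <= agreement_normal S S' e * v S e
  ?= iff (cuts S e == cuts S' e) ==> (cuts U e == cuts S e).
Proof.
rewrite ffunE !cutvecE; apply/leifP.
by case: (cuts S e); case: (cuts S' e); case: (cuts U e);
  rewrite /= ?mulr1 ?mulr0 ?mulN1r ?oppr_lt0 ?ltr01 ?eqxx.
Qed.

Lemma dot_agreement_leif S S' U :
  dot (agreement_normal S S') (v U) <= dot (agreement_normal S S') (v S)
  ?= iff [forall e, (cuts S e == cuts S' e) ==> (cuts U e == cuts S e)].
Proof. exact: leif_sum (fun e _ => agreement_term_leif S S' U e). Qed.

Lemma dot_agreement_sym S S' :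
  dot (agreement_normal S S') (v S') = dot (agreement_normal S S') (v S).
Proof.
apply/eqP; rewrite (dot_agreement_leif S S' S').2.
by apply/forallP => e; rewrite eq_sym implybb.
Qed.

Definition agrees_with S S' U :=
  forall e, cuts S e = cuts S' e -> cuts U e = cuts S e.

Lemma in_cut_segment S S' x : segment (v S) (v S') x -> in_cut E x.
Proof.
move=> [t [t_ge0 [t_le1 xE]]].
exists [ffun U => (if U == S then 1 - t else 0) + (if U == S' then t else 0)].
split; [|split].
- by move=> U; rewrite ffunE addr_ge0 //; case: ifP; rewrite // subr_ge0.
- under eq_bigr do rewrite ffunE.
  by rewrite big_split /= -!big_mkcond !big_pred1_eq subrK.
- move=> e; under eq_bigr do rewrite ffunE mulrDl !(fun_if (fun a => a * _)) !mul0r.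
  by rewrite big_split /= -!big_mkcond !big_pred1_eq xE.
Qed.

Lemma segment_face S S' :
  (forall U, agrees_with S S' U -> v U = v S \/ v U = v S') ->
  is_face E (segment (v S) (v S')).
Proof.
move=> agree_cases; set c := agreement_normal S S'.
have valid U : dot c (v U) <= dot c (v S) by rewrite (dot_agreement_leif S S' U).
exists c, (dot c (v S)); split=> [x [w [w_ge0 [w_sum1 xE]]]|x].
  exact: (dot_combination_le w_ge0 w_sum1 xE valid).
split=> [seg_x | [[w [w_ge0 [w_sum1 xE]]] xd]].
  split; first exact: in_cut_segment seg_x.
  exact: segment_dot (dot_agreement_sym S S') seg_x.
apply: (combination_segment w_ge0 w_sum1 xE) => U wU; apply: agree_cases => e.
have /eqP := combination_tight w_ge0 w_sum1 xE valid xd wU.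
rewrite (dot_agreement_leif S S' U).2 => /forallP/(_ e)/implyP agree_e.
by move=> /eqP/agree_e/eqP.
Qed.

Lemma cutvec_vertex S : is_vertex E (v S).
Proof.
have agree_same U : agrees_with S S U -> v U = v S \/ v U = v S.
  by move=> agree; left; apply/ffunP => e; rewrite !cutvecE agree.
have [c [d [valid faceE]]] := segment_face agree_same.
exists c, d; split=> // x.
by split=> [->|/faceE/segment_same //]; apply/faceE/segment_same.
Qed.

End CutPolytopeFaces.

Section CompleteMultipartite.
Local Open Scope ring_scope.
Variables (R : realFieldType) (T : finType) (k : nat) (p : T -> 'I_k).
Local Notation E := (multipartite_edges p).
Local Notation v := (@cutvec R T E).

Lemma multipartite_pair x y : p x != p y -> [set x; y] \in E.
Proof.
move=> pxy; rewrite inE; apply/existsP; exists x; apply/existsP; exists y.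
by rewrite pxy eqxx.
Qed.

Lemma cuts_pair (Z : {set T}) x y :
  p x != p y -> cuts E Z [set x; y] = ((x \in Z) != (y \in Z)).
Proof.
move=> pxy; rewrite /cuts multipartite_pair //= card_pairI_eq1 //.
by apply: contraNneq pxy => ->.
Qed.

Lemma cutvec_xor_const (U Z : {set T}) b :
  (forall z, (z \in U) = (z \in Z) (+) b) -> v U = v Z.
Proof.
move=> UZ; apply/ffunP => e; rewrite !cutvecE; congr (_ %:R).
case Ee: (e \in E); last by rewrite /cuts Ee.
move: Ee; rewrite inE => /existsP[x /existsP[y /andP[pxy /eqP ->]]].
by rewrite !cuts_pair // !UZ; case: (x \in Z); case: (y \in Z); case: (b).
Qed.

Lemma multipartite_class_const (C : pred T) (g : T -> bool) a b :
  C a -> C b -> p a != p b ->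
  (forall x y, C x -> C y -> p x != p y -> g x = g y) ->
  forall z, C z -> g z = g a.
Proof.
move=> aC bC pab g_edge z zC.
have [pza|pza] := eqVneq (p z) (p a); last exact: g_edge.
by rewrite (g_edge z b) ?pza // [RHS](g_edge a b).
Qed.

End CompleteMultipartite.

Section MultipartiteClique.
Local Open Scope ring_scope.
Variables (R : realFieldType) (T : finType) (k : nat) (p : T -> 'I_k) (m : nat).
Variables (a b : 'I_m.+1 -> T).
Hypotheses (a_inj : injective a) (b_inj : injective b)
  (ab_parts : forall i j, p (a i) != p (b j)).
Local Notation E := (multipartite_edges p).
Local Notation v := (@cutvec R T E).

Definition pair_union (X : {set 'I_m.+1}) : {set T} := a @: X :|: b @: X.

Lemma mem_pair_union_a X j : (a j \in pair_union X) = (j \in X).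
Proof.
rewrite in_setU mem_imset //; case: (j \in X) => //=.
by apply/imsetP => -[i _ aj_bi]; move: (ab_parts j i); rewrite aj_bi eqxx.
Qed.

Lemma mem_pair_union_b X j : (b j \in pair_union X) = (j \in X).
Proof.
rewrite in_setU mem_imset // orbC; case: (j \in X) => //=.
by apply/imsetP => -[i _ bj_ai]; move: (ab_parts i j); rewrite -bj_ai eqxx.
Qed.

Lemma cutvec_pair_union_inj (X X' : {set 'I_m.+1}) : ord0 \notin X -> ord0 \notin X' ->
  v (pair_union X) = v (pair_union X') -> X = X'.
Proof.
move=> X0 X'0 vXX'; apply/setP => j.
have /eqP := congr1 (fun u : {ffun {set T} -> R} => u [set a j; b ord0]) vXX'.
rewrite !cutvecE eqr_nat !cuts_pair // !mem_pair_union_a !mem_pair_union_b.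
by rewrite (negbTE X0) (negbTE X'0); case: (j \in X); case: (j \in X').
Qed.

Lemma pair_union_segment_cases (X X' : {set 'I_m.+1}) (U : {set T}) :
  ord0 \notin X -> ord0 \notin X' -> X != X' ->
  agrees_with E (pair_union X) (pair_union X') U ->
  v U = v (pair_union X) \/ v U = v (pair_union X').
Proof.
move=> X0 X'0 XX' agree.
have /existsP[j0 Xj0] : [exists j, (j \in X) != (j \in X')].
  apply: contraNT XX' => /existsPn same.
  by apply/eqP/setP => j; apply/eqP/negPn/same.
pose h z := (z \in pair_union X) != (z \in pair_union X').
pose g z := (z \in U) != (z \in pair_union X).
have g_edge x y : p x != p y -> h x = h y -> g x = g y.
  move=> pxy; have := agree [set x; y]; rewrite !cuts_pair // /g /h.
  by case: (x \in U); case: (y \in U); case: (x \in pair_union X);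
    case: (y \in pair_union X); case: (x \in pair_union X');
    case: (y \in pair_union X') => /=; intuition.
have g_class z : g z = if h z then g (a j0) else g (a ord0).
  have class_const c a' b' :
      p a' != p b' -> h a' = c -> h b' = c -> h z = c -> g z = g a'.
    move=> pab ha hb hz.
    apply: (multipartite_class_const (p := p) (C := fun x => h x == c) (b := b'));
      rewrite ?ha ?hb ?hz // => x y /eqP hx /eqP hy pxy.
    by apply: g_edge; rewrite ?hx ?hy.
  case hz: (h z).
    by apply: (class_const _ _ (b j0) (ab_parts _ _)) hz;
      rewrite /h ?mem_pair_union_a ?mem_pair_union_b.
  by apply: (class_const _ _ (b ord0) (ab_parts _ _)) hz;
    rewrite /h ?mem_pair_union_a ?mem_pair_union_b (negbTE X0) (negbTE X'0).
move: (g (a j0)) (g (a ord0)) g_class => c1 c0 g_class.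
have [c1c0 | c1c0] := eqVneq c1 c0.
  left; apply: (@cutvec_xor_const R T k p U _ c1) => z; move: (g_class z).
  by rewrite /g -c1c0 if_same; case: (z \in U); case: (z \in pair_union X); case: (c1).
right; apply: (@cutvec_xor_const R T k p U _ c0) => z.
move: (g_class z) c1c0; rewrite /g /h.
by case: (z \in U); case: (z \in pair_union X); case: (z \in pair_union X');
  case: (c1); case: (c0).
Qed.

Lemma pair_union_clique : @skeleton_clique_ge R T E (2 ^ m).
Proof.
pose Xs := enum (powerset [set~ ord0 : 'I_m.+1]).
have Xs0 X : X \in Xs -> ord0 \notin X.
  by rewrite mem_enum powersetE => /subsetP sub; apply/negP => /sub; rewrite !inE eqxx.
exists [seq v (pair_union X) | X <- Xs]; split.
- rewrite map_inj_in_uniq ?enum_uniq // => X X' /Xs0 X0 /Xs0 X'0.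
  exact: cutvec_pair_union_inj.
- by rewrite size_map -cardE card_powerset cardsC1 card_ord.
- by move=> _ /mapP[X _ ->]; exact: cutvec_vertex.
move=> _ _ /mapP[X /Xs0 X0 ->] /mapP[X' /Xs0 X'0 ->] vXX'.
split; [exact: cutvec_vertex | exact: cutvec_vertex | done |].
apply: segment_face => U; apply: pair_union_segment_cases => //.
by apply/eqP => XX'; apply: vXX'; rewrite XX'.
Qed.

End MultipartiteClique.

Theorem theorem12 (R : realFieldType) (T : finType) (k : nat) (hk : 1 < k)
  (p : T -> 'I_k) (n : 'I_k -> nat)
  (hn : forall i : 'I_k, #|[set x | p x == i]| = n i)
  (hmono : forall i j : 'I_k, (i <= j)%N -> (n j <= n i)%N)
  (hpos : forall i : 'I_k, (1 <= n i)%N) :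
  @skeleton_clique_ge R T (multipartite_edges p)
    (2 ^ (n (Ordinal hk) - 1))%N.
Proof.
set i1 := Ordinal hk; pose i0 : 'I_k := Ordinal (ltnW hk).
pose part i := [set x | p x == i].
have size1 : (n i1 - 1).+1 = #|part i1| by rewrite hn subn1 prednK.
have size0 : ((n i1 - 1).+1 <= #|part i0|)%N by rewrite size1 !hn hmono.
have in_part i (j : 'I_#|part i|) : p (enum_val j) = i.
  by have := enum_valP j; rewrite inE => /eqP.
apply: (@pair_union_clique R T k p _ (fun j => enum_val (widen_ord size0 j))
                                     (fun j => enum_val (cast_ord size1 j))).
- by move=> i j /= /enum_val_inj [] /val_inj.
- by move=> i j /= /enum_val_inj /cast_ord_inj.
- by move=> i j; rewrite !in_part.
Qed.
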